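(* Each of the following, with the convention $\boldsymbol{\alpha}_0=\boldsymbol{\beta}_0=1$ and the displayed formulas valid for $n\ge1$, is a WP-Bailey pair (with the indicated value of $a$, and arbitrary generic $k$): (i) ($a=q$) $\boldsymbol{\alpha}_n=\dfrac{(-1)^n(q^{-n}-q^{n+1})}{1-q}$, $\boldsymbol{\beta}_n=\dfrac{(-1)^n(k^2;q^2)_n}{q^n(q^2;q^2)_n}$; (ii) ($a=q$) $\boldsymbol{\alpha}_n=\dfrac{q^{-n/2}+q^{n/2+1/2}}{1+q^{1/2}}$, $\boldsymbol{\beta}_n=\dfrac{(k,kq^{-1/2};q)_n}{(q^{3/2},q;q)_n}\,q^{-n/2}$; (iii) ($a=1$) $\boldsymbol{\alpha}_n=(-1)^nq^{-n^2/2}(q^{-n/2}+q^{n/2})$, $\boldsymbol{\beta}_n=\dfrac{(-1)^n(k;q)_n}{q^{(n^2+n)/2}(q;q)_n}$.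
   Context: Notation: $(x;q)_n=\prod_{i=0}^{n-1}(1-xq^i)$, $(x_1,\dots,x_j;q)_n=(x_1;q)_n\cdots(x_j;q)_n$. A pair of sequences $(\boldsymbol{\alpha}_n(a,k,q),\boldsymbol{\beta}_n(a,k,q))_{n\ge0}$ is a WP-Bailey pair (relative to $a$, with parameter $k$) if $\boldsymbol{\alpha}_0=1$ and for all $n\ge0$ \[\boldsymbol{\beta}_n=\sum_{j=0}^n\frac{(k/a;q)_{n-j}(k;q)_{n+j}}{(q;q)_{n-j}(aq;q)_{n+j}}\boldsymbol{\alpha}_j.\] *)

From HB Require Import structures.
From mathcomp Require Import all_boot all_order all_algebra.
Set Implicit Arguments. Unset Strict Implicit. Unset Printing Implicit Defensive.
Import Order.TTheory GRing.Theory Num.Theory.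
Local Open Scope ring_scope.

Definition qpoch (R : ringType) (x q : R) (n : nat) : R :=
  \prod_(i < n) (1 - x * q ^+ i).

Definition WP_Bailey_pair (R : fieldType) (a k q : R) (alpha beta : nat -> R) : Prop :=
  alpha 0%N = 1 /\
  forall n : nat,
    beta n = \sum_(j < n.+1)
      (qpoch (k / a) q (n - j) * qpoch k q (n + j))
        / (qpoch q q (n - j) * qpoch (a * q) q (n + j)) * alpha j.

(* Every identity is proved by creative telescoping.  The right-hand side
   beta satisfies a first order recurrence beta (n+1) = c n * beta n, and
   the summand T n j = K (n - j) (n + j) * alpha j of the defining sum, with
   K the WP-Bailey kernel, satisfies
   T (n+1) j - c n * T n j = H n (j+1) - H n j  for an explicit certificate
   H n j = G n j * K (n + 1 - j) (n + j), so the difference of consecutive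
   sums telescopes.  Consecutive values of K differ by factors that are
   rational in q^m and q^p, hence each certificate identity is an identity
   of rational functions in q (resp. q^(1/2)), k and one kernel value. *)
From HB Require Import structures.
From mathcomp Require Import all_boot all_order all_algebra.
From mathcomp Require Import ring zify.
Import GRing.Theory.
Local Open Scope ring_scope.

Lemma qpoch0 (R : nzRingType) (x q : R) : qpoch x q 0 = 1.
Proof. by rewrite /qpoch big_ord0. Qed.

Lemma qpochS (R : nzRingType) (x q : R) n :
  qpoch x q n.+1 = qpoch x q n * (1 - x * q ^+ n).
Proof. by rewrite /qpoch big_ord_recr. Qed.

Lemma sum_creative_telescoping (R : pzRingType) (T H : nat -> nat -> R)
    (c beta : nat -> R) :
  beta 0%N = T 0%N 0%N ->
  (forall n, beta n.+1 = c n * beta n) ->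
  (forall n, H n 0%N = 0) ->
  (forall n j, (j <= n)%N -> T n.+1 j - c n * T n j = H n j.+1 - H n j) ->
  (forall n, T n.+1 n.+1 = - H n n.+1) ->
  forall n, beta n = \sum_(j < n.+1) T n j.
Proof.
move=> beta0 betaS H0 step diag; elim=> [|n IH]; first by rewrite big_ord1.
have tele : \sum_(j < n.+1) (T n.+1 j - c n * T n j) = H n n.+1.
  rewrite -(big_mkord xpredT (fun j => T n.+1 j - c n * T n j)).
  by rewrite (@telescope_sumr_eq _ 0 n.+1 (H n)) ?H0 ?subr0 // => j /andP[_ ?]; apply: step.
rewrite betaS IH [RHS]big_ord_recr /= diag -tele sumrB mulr_sumr.
by rewrite opprB addrC subrK.
Qed.

Definition wp_kernel {R : fieldType} (a k q : R) (m p : nat) : R :=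
  qpoch (k / a) q m * qpoch k q p / (qpoch q q m * qpoch (a * q) q p).

Section WPKernel.
Variables (R : fieldType) (a k q : R).
Local Notation K := (wp_kernel a k q).

Lemma wp_kernel00 : K 0 0 = 1.
Proof. by rewrite /wp_kernel !(qpoch0, mulr1, invr1). Qed.

Lemma wp_kernelSl m p : K m.+1 p = K m p * (1 - k / a * q ^+ m) / (1 - q * q ^+ m).
Proof. by rewrite /wp_kernel !qpochS !invfM; ring. Qed.

Lemma wp_kernelSr m p : K m p.+1 = K m p * (1 - k * q ^+ p) / (1 - a * q * q ^+ p).
Proof. by rewrite /wp_kernel !qpochS !invfM; ring. Qed.

End WPKernel.

Section WPCertificate.
Variables (R : fieldType) (a k q : R) (alpha beta c : nat -> R) (G : nat -> nat -> R).
Local Notation K := (wp_kernel a k q).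

(* The step identity is indexed by m = n - j, which avoids truncated
   subtraction in the kernel arguments. *)
Hypotheses (alpha0 : alpha 0%N = 1) (beta0 : beta 0%N = 1)
  (betaS : forall n, beta n.+1 = c n * beta n)
  (G0 : forall n, G n 0%N = 0)
  (G_step : forall m j,
     K m.+1 (m + j + j).+1 * alpha j - c (m + j) * (K m (m + j + j) * alpha j)
       = G (m + j) j.+1 * K m (m + j + j).+1 - G (m + j) j * K m.+1 (m + j + j))
  (G_diag : forall n, K 0 (n + n).+2 * alpha n.+1 = - (G n n.+1 * K 0 (n + n).+1)).

Lemma WP_Bailey_pair_of_certificate : WP_Bailey_pair a k q alpha beta.
Proof.
split=> //; apply: (@sum_creative_telescoping _
  (fun n j => K (n - j) (n + j) * alpha j) (fun n j => G n j * K (n.+1 - j) (n + j)) c).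
- by rewrite beta0 alpha0 subnn addn0 wp_kernel00 mulr1.
- exact: betaS.
- by move=> n; rewrite /= G0 mul0r.
- move=> n j /subnK <-.
  by rewrite /= subSn ?leq_addl // !addnK addSn addnS subSS addnK G_step.
- by move=> n; rewrite subnn addSn !addnS G_diag.
Qed.

End WPCertificate.

Lemma if_eq0_oneE (R : nzRingType) (f : nat -> R) n :
  f 0%N = 1 -> (if n == 0%N then 1 else f n) = f n.
Proof. by case: n => [->|]. Qed.

Lemma expr_sqrS (R : nzRingType) (x : R) n :
  x ^+ (n.+1 * n.+1) = x ^+ (n * n) * (x ^+ n) ^+ 2 * x.
Proof. by rewrite -exprM -exprD -exprSr; congr (_ ^+ _); lia. Qed.

(* Discharges the side conditions of [field]: nonzero powers of x, and
   1 - x ^+ N with 0 < N once the products of powers of x are collected. *)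
Ltac monomial_neq0 x_nroot :=
  repeat (apply/andP; split);
  repeat (rewrite -expr2 || rewrite -exprS || rewrite -exprD || rewrite -exprM);
  first [ assumption | exact: oner_neq0 | by apply: expf_neq0
        | rewrite subr_eq0 eq_sym x_nroot //; lia ].

Section PairI.
Variables (R : fieldType) (q k : R).
Hypotheses (q_neq0 : q != 0) (q_nroot : forall N, (0 < N)%N -> q ^+ N != 1).

Let alpha n := (-1) ^+ n * (q ^- n - q ^+ n.+1) / (1 - q).
Let beta n := (-1) ^+ n * qpoch (k ^+ 2) (q ^+ 2) n / (q ^+ n * qpoch (q ^+ 2) (q ^+ 2) n).

Lemma WP_Bailey_pair_i :
  WP_Bailey_pair q k q (fun n => if n == 0%N then 1 else alpha n)
                       (fun n => if n == 0%N then 1 else beta n).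
Proof.
have q1 : 1 - q != 0 by rewrite subr_eq0 eq_sym -(expr1 q) q_nroot.
have alphaE j : (if j == 0%N then 1 else alpha j) = alpha j.
  by apply: if_eq0_oneE; rewrite /alpha !expr0 invr1 expr1 mul1r divff.
apply: (@WP_Bailey_pair_of_certificate _ _ _ _ _ _
  (fun n => - (1 - k ^+ 2 * (q ^+ n) ^+ 2) / (q * (1 - q ^+ 2 * (q ^+ n) ^+ 2)))
  (fun n j => - (1 - k * q * (q ^+ n) ^+ 2) / ((1 - q) * (1 - q ^+ 2 * (q ^+ n) ^+ 2))
          * (1 - (q ^+ j) ^+ 2) * (-1) ^+ j / q ^+ j)) => //.
- move=> n /=; rewrite if_eq0_oneE; last by rewrite /beta !(qpoch0, expr0, mul1r, invr1).
  rewrite /beta !qpochS [(-1) ^+ n.+1]exprS [q ^+ n.+1]exprS [(q ^+ 2) ^+ n]exprAC !invfM.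
  ring.
- by move=> n; rewrite expr0 expr1n subrr !mulr0 !mul0r.
- move=> m j /=; rewrite !alphaE /alpha !wp_kernelSl !wp_kernelSr !exprD.
  rewrite [(-1) ^+ j.+1]exprS [q ^+ j.+1]exprS.
  field; monomial_neq0 q_nroot.
- move=> n /=; rewrite /alpha !wp_kernelSr !exprS !exprD.
  field; monomial_neq0 q_nroot.
Qed.
End PairI.

Section PairsIIandIII.
Variables (R : fieldType) (s k : R).
Hypotheses (s_neq0 : s != 0) (s_nroot : forall N, (0 < N)%N -> s ^+ N != 1).
Local Notation q := (s ^+ 2).

Let alpha n := (s ^- n + s ^+ n.+1) / (1 + s).
Let beta n := qpoch k q n * qpoch (k * s^-1) q n / (qpoch (s ^+ 3) q n * qpoch q q n) * s ^- n.

Lemma WP_Bailey_pair_ii :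
  WP_Bailey_pair q k q (fun n => if n == 0%N then 1 else alpha n)
                       (fun n => if n == 0%N then 1 else beta n).
Proof.
have s1 : 1 + s != 0.
  apply: contraNneq (s_nroot 2 isT); rewrite addrC => /eqP; rewrite addr_eq0 => /eqP ->.
  by rewrite sqrrN expr1n.
have alphaE j : (if j == 0%N then 1 else alpha j) = alpha j.
  by apply: if_eq0_oneE; rewrite /alpha expr0 invr1 expr1 divff.
apply: (@WP_Bailey_pair_of_certificate _ _ _ _ _ _
  (fun n => (1 - k * q ^+ n) * (1 - k * s^-1 * q ^+ n) * s^-1
              / ((1 - s ^+ 3 * q ^+ n) * (1 - q * q ^+ n)))
  (fun n j => - (1 - k * q * (q ^+ n) ^+ 2)
                / ((1 + s) * (1 - s ^+ 3 * q ^+ n) * (1 - q * q ^+ n))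
                * (1 - q ^+ j) / s ^+ j)) => //.
- move=> n /=; rewrite if_eq0_oneE; last by rewrite /beta !(qpoch0, expr0, mul1r, invr1).
  by rewrite /beta !qpochS [s ^+ n.+1]exprS !invfM; ring.
- by move=> n; rewrite expr0 subrr !mulr0 !mul0r.
- move=> m j /=; rewrite !alphaE /alpha !wp_kernelSl !wp_kernelSr !exprD.
  rewrite [s ^+ j.+1]exprS [q ^+ j.+1]exprS [q ^+ j]exprAC.
  field; monomial_neq0 s_nroot.
- move=> n /=; rewrite /alpha !wp_kernelSr [q ^+ (n + n).+1]exprS [s ^+ n.+2]exprS.
  rewrite [s ^+ n.+1]exprS [q ^+ n.+1]exprS exprD [q ^+ n]exprAC.
  field; monomial_neq0 s_nroot.
Qed.

Let gamma n := (-1) ^+ n * s ^- (n * n) * (s ^- n + s ^+ n).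
Let delta n := (-1) ^+ n * qpoch k q n / (s ^+ (n * n + n) * qpoch q q n).

Lemma WP_Bailey_pair_iii :
  WP_Bailey_pair 1 k q (fun n => if n == 0%N then 1 else gamma n)
                       (fun n => if n == 0%N then 1 else delta n).
Proof.
(* gamma 0 = 2 differs from alpha 0 = 1, so the certificate is cut off at j = 0. *)
apply: (@WP_Bailey_pair_of_certificate _ _ _ _ _ _
  (fun n => - (1 - k * q ^+ n) / (q * q ^+ n * (1 - q * q ^+ n)))
  (fun n j => if j == 0%N then 0 else
     - (1 - k * q * (q ^+ n) ^+ 2) / (q * q ^+ n * (1 - q * q ^+ n))
       * (-1) ^+ j * s ^- (j * j) * s ^+ j)) => //.
- move=> n /=; rewrite if_eq0_oneE; last by rewrite /delta !(qpoch0, expr0, mul1r, invr1).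
  rewrite /delta !qpochS [(-1) ^+ n.+1]exprS !exprD expr_sqrS [s ^+ n.+1]exprS [q ^+ n]exprAC.
  by rewrite !expr2 !invfM; ring.
- move=> m [|j] /=.
    rewrite /gamma !wp_kernelSl !wp_kernelSr !addn0 muln1 expr1.
    field; monomial_neq0 s_nroot.
  rewrite /gamma !wp_kernelSl !wp_kernelSr !exprD !expr_sqrS.
  rewrite [q ^+ j.+1]exprS [q ^+ j]exprAC !exprS.
  field; monomial_neq0 s_nroot.
- move=> n /=; rewrite /gamma !wp_kernelSr [q ^+ (n + n).+1]exprS !exprD expr_sqrS.
  rewrite [s ^+ n.+1]exprS [(-1) ^+ n.+1]exprS [q ^+ n]exprAC.
  field; monomial_neq0 s_nroot.
Qed.

End PairsIIandIII.

(* s plays the role of q^(1/2) *)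
Theorem mainTheorem6 (R : fieldType) (s k : R) :
  s ^+ 2 != 0 ->
  (forall m : nat, (0 < m)%N -> (s ^+ 2) ^+ m != 1) ->
  let q := s ^+ 2 in
  (* (i), a = q *)
  WP_Bailey_pair q k q
    (fun n => if n == 0%N then 1
              else (-1) ^+ n * (q ^- n - q ^+ n.+1) / (1 - q))
    (fun n => if n == 0%N then 1
              else (-1) ^+ n * qpoch (k ^+ 2) (q ^+ 2) n
                   / (q ^+ n * qpoch (q ^+ 2) (q ^+ 2) n))
  /\
  (* (ii), a = q *)
  WP_Bailey_pair q k q
    (fun n => if n == 0%N then 1
              else (s ^- n + s ^+ n.+1) / (1 + s))
    (fun n => if n == 0%N then 1
              else qpoch k q n * qpoch (k * s^-1) q n
                   / (qpoch (s ^+ 3) q n * qpoch q q n) * s ^- n)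
  /\
  (* (iii), a = 1 *)
  WP_Bailey_pair 1 k q
    (fun n => if n == 0%N then 1
              else (-1) ^+ n * s ^- (n * n) * (s ^- n + s ^+ n))
    (fun n => if n == 0%N then 1
              else (-1) ^+ n * qpoch k q n
                   / (s ^+ (n * n + n) * qpoch q q n)).
Proof.
move=> q_neq0 q_nroot q.
have s_neq0 : s != 0 by apply: contraNneq q_neq0 => ->; rewrite expr0n.
have s_nroot N : (0 < N)%N -> s ^+ N != 1.
  by move=> N_gt0; apply: contraNneq (q_nroot N N_gt0) => sN1; rewrite exprAC sN1 expr1n.
split; first exact: WP_Bailey_pair_i.
split; first exact: WP_Bailey_pair_ii.
exact: WP_Bailey_pair_iii.
Qed.
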